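(* Let $|q|<1$ and let $(\alpha_n,\beta_n)$ be a Bailey pair with respect to $a$, with $|aq|<1$, no denominator vanishing, and all series converging absolutely. Then $$\sum_{n=1}^{\infty} (q;q)_{n-1}(-a)^{n}q^{n(n+1)/2}\beta_n - \sum_{n=1}^{\infty}\frac{(q;q)_{n-1}(-a)^{n}q^{n(n+1)/2}}{(q a ;q)_n}\alpha_n=f_2(a,q),$$ where $f_2(a,q)$ is given by each of the following (equal) expressions: $$f_2(a,q)=-\sum_{n=1}^{\infty} \frac{(1-a q^{2n})q^{n^2} a^{n}}{(1-a q^{n})(1-q^n)}=\sum_{n=1}^{\infty} \frac{q^{n(n+1)/2}(-a)^{n}}{(q a;q)_{n}(1-q^n)}=-\sum_{n=1}^{\infty}\frac{a q^n}{1-aq^n}.$$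
   Context: Notation: $(x;q)_n=(1-x)(1-xq)\cdots(1-xq^{n-1})$, $(x;q)_0=1$. A Bailey pair with respect to $a$ (base $q$) is a pair of sequences $(\alpha_n,\beta_n)_{n\ge0}$ with $\alpha_0=\beta_0=1$ and, for $n>0$, $\beta_n=\sum_{j=0}^{n}\frac{\alpha_j}{(q;q)_{n-j}(aq;q)_{n+j}}$. *)

From Stdlib Require Import Reals.
Open Scope R_scope.

Record Cx : Type := mkC { Re : R; Im : R }.

Definition Czero : Cx := mkC 0 0.
Definition Cone : Cx := mkC 1 0.
Definition Cadd (z w : Cx) : Cx := mkC (Re z + Re w) (Im z + Im w).
Definition Copp (z : Cx) : Cx := mkC (- Re z) (- Im z).
Definition Csub (z w : Cx) : Cx := Cadd z (Copp w).
Definition Cmul (z w : Cx) : Cx :=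
  mkC (Re z * Re w - Im z * Im w) (Re z * Im w + Im z * Re w).
Definition Cinv (z : Cx) : Cx :=
  mkC (Re z / (Re z * Re z + Im z * Im z)) (- Im z / (Re z * Re z + Im z * Im z)).
Definition Cdiv (z w : Cx) : Cx := Cmul z (Cinv w).
Definition Cnorm (z : Cx) : R := sqrt (Re z * Re z + Im z * Im z).

Fixpoint Cpow (z : Cx) (n : nat) : Cx :=
  match n with O => Cone | S m => Cmul (Cpow z m) z end.

Fixpoint qpoch (x q : Cx) (n : nat) : Cx :=
  match n with
  | O => Cone
  | S m => Cmul (qpoch x q m) (Csub Cone (Cmul x (Cpow q m)))
  end.

Fixpoint Csum_upto (f : nat -> Cx) (n : nat) : Cx :=
  match n with
  | O => f O
  | S m => Cadd (Csum_upto f m) (f (S m))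
  end.

Definition Cseries (f : nat -> Cx) (l : Cx) : Prop :=
  infinite_sum (fun n => Re (f n)) (Re l) /\ infinite_sum (fun n => Im (f n)) (Im l).

Definition Cseries1 (f : nat -> Cx) (l : Cx) : Prop := Cseries (fun n => f (S n)) l.

Definition Cabs_conv1 (f : nat -> Cx) : Prop :=
  exists s : R, infinite_sum (fun n => Cnorm (f (S n))) s.

Definition bailey_pair (a q : Cx) (alpha beta : nat -> Cx) : Prop :=
  alpha O = Cone /\ beta O = Cone /\
  forall n : nat, (0 < n)%nat ->
    beta n = Csum_upto (fun j => Cdiv (alpha j)
                                  (Cmul (qpoch q q (n - j)) (qpoch (Cmul a q) q (n + j)))) n.

From Pilot Require Import Defs.
From Stdlib Require Import Reals Lra Lia Classical_Prop.
From Coquelicot Require Coquelicot.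
Open Scope R_scope.

(* Write [T n = n (n + 1) / 2].  Inserting the Bailey relation into the beta-series and
   exchanging the two summations gives, for the partial sums up to [N],
     sum tb - sum ta = sum_(n <= N) q^(T n) (-a)^n / ((qa;q)_n (1 - q^n))
                       - sum_(j <= N) ta_j (1 - sum_(m <= N - j) c_(j,m)),
   where [c_(j,m) = (q^j;q)_m (-a q^j)^m q^(T m) / ((q;q)_m (a q^(j+1);q)_(m+j))].
   For every [j >= 1] the [c_(j,m)] sum to [1]: for [j = 1] the partial sums are explicit,
   and a WZ-type relation [c_(j+1,m) = c_(j,m+1) + G_j(m+2) - G_j(m+1)] passes from [j] to
   [j + 1].  The defects [1 - sum_m c_(j,m)] are thus bounded and tend to [0], so the
   absolute convergence of the alpha-series kills the error term (Tannery's theorem).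
   The three expressions of [f_2] are identified through functional equations
   [F(x) - F(x q) = +-x q / (1 - x q) + r(x)], iterated [K] times from [x = a]; taking
   [K] equal to the number of terms, all remainders are bounded by geometric sequences. *)

Module ComplexQSeries.
Import Coquelicot.Coquelicot.
Local Open Scope C_scope.

Fixpoint csum (f : nat -> C) (n : nat) : C :=
  match n with O => 0 | S k => csum f k + f k end.
Fixpoint rsum (f : nat -> R) (n : nat) : R :=
  match n with O => 0%R | S k => (rsum f k + f k)%R end.

Lemma csum_S f n : csum f (S n) = csum f n + f n.
Proof. reflexivity. Qed.

Lemma csum_ext f g n : (forall i, (i < n)%nat -> f i = g i) -> csum f n = csum g n.
Proof.
  induction n; simpl; intros H; auto.
  rewrite IHn by (intros; apply H; lia). rewrite H by lia. auto.
Qed.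

Lemma csum_plus f g n : csum (fun i => f i + g i) n = csum f n + csum g n.
Proof. induction n; simpl. ring. rewrite IHn; ring. Qed.

Lemma csum_opp f n : csum (fun i => - f i) n = - csum f n.
Proof. induction n; simpl. ring. rewrite IHn; ring. Qed.

Lemma csum_minus f g n : csum (fun i => f i - g i) n = csum f n - csum g n.
Proof. induction n; simpl. ring. rewrite IHn; ring. Qed.

Lemma csum_scal_l c f n : csum (fun i => c * f i) n = c * csum f n.
Proof. induction n; simpl. ring. rewrite IHn; ring. Qed.

Lemma csum_add_range f n k : csum f (n + k) = csum f n + csum (fun i => f (n + i)%nat) k.
Proof.
  induction k; simpl. rewrite Nat.add_0_r; ring.
  rewrite Nat.add_succ_r; simpl. rewrite IHk; ring.
Qed.

Lemma csum_shift f n : csum f (S n) = f O + csum (fun i => f (S i)) n.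
Proof. induction n; simpl. ring. simpl in IHn. rewrite IHn. ring. Qed.

Lemma csum_eq_0 (f : nat -> C) n : (forall i, (i < n)%nat -> f i = 0) -> csum f n = 0.
Proof.
  induction n; simpl; intros H; auto.
  rewrite IHn by (intros; apply H; lia). rewrite H by lia. ring.
Qed.

Lemma csum_telescope (g : nat -> C) n : csum (fun m => g (S m) - g m) n = g n - g O.
Proof. induction n; simpl. ring. rewrite IHn. ring. Qed.

Lemma csum_triangle_swap (F : nat -> nat -> C) N :
  csum (fun k => csum (F k) (S k)) N = csum (fun J => csum (fun i => F (J + i)%nat J) (N - J)) N.
Proof.
  induction N. reflexivity.
  rewrite csum_S, IHN, (csum_S (fun J => csum (fun i => F (J + i)%nat J) (S N - J)) N).
  replace (S N - N)%nat with 1%nat by lia.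
  rewrite (csum_ext (fun J => csum (fun i => F (J + i)%nat J) (S N - J))
                    (fun J => csum (fun i => F (J + i)%nat J) (N - J) + F N J) N).
  2:{ intros J HJ. replace (S N - J)%nat with (S (N - J)) by lia. rewrite csum_S.
      replace (J + (N - J))%nat with N by lia. reflexivity. }
  rewrite csum_plus. simpl. rewrite Nat.add_0_r. ring.
Qed.

Lemma rsum_ext f g n : (forall i, (i < n)%nat -> f i = g i) -> rsum f n = rsum g n.
Proof.
  induction n; simpl; intros H; auto.
  rewrite IHn by (intros; apply H; lia). rewrite H by lia. auto.
Qed.

Lemma rsum_add_range f n k : rsum f (n + k) = (rsum f n + rsum (fun i => f (n + i)%nat) k)%R.
Proof.
  induction k; simpl. rewrite Nat.add_0_r; ring.
  rewrite Nat.add_succ_r; simpl. rewrite IHk; ring.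
Qed.

Lemma rsum_nonneg f n : (forall i, 0 <= f i)%R -> (0 <= rsum f n)%R.
Proof. intros H; induction n; simpl. lra. specialize (H n). lra. Qed.

Lemma rsum_le_compat f g n : (forall i, (i < n)%nat -> f i <= g i)%R -> (rsum f n <= rsum g n)%R.
Proof.
  induction n; simpl; intros H. lra.
  assert (rsum f n <= rsum g n)%R by (apply IHn; intros; apply H; lia).
  specialize (H n ltac:(lia)). lra.
Qed.

Lemma rsum_scal_l c f n : rsum (fun i => c * f i)%R n = (c * rsum f n)%R.
Proof. induction n; simpl. ring. rewrite IHn; ring. Qed.

Lemma rsum_geom_le r n : (0 <= r < 1)%R -> (rsum (fun i => r ^ i) n <= / (1 - r))%R.
Proof.
  intros Hr. assert (E : forall n, ((1 - r) * rsum (fun i => r ^ i) n = 1 - r ^ n)%R).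
  { induction n0; simpl. ring. rewrite Rmult_plus_distr_l, IHn0. ring. }
  assert (0 <= r ^ n)%R by (apply pow_le; lra).
  apply (Rmult_le_reg_l (1 - r)); [lra|]. rewrite E, Rinv_r by lra. lra.
Qed.

Lemma Cmod_csum_le f n : (Cmod (csum f n) <= rsum (fun i => Cmod (f i)) n)%R.
Proof. induction n; simpl. rewrite Cmod_0; lra. eapply Rle_trans. apply Cmod_triangle. lra. Qed.

Lemma Cmod_csum_geom_le f n c rho : (0 <= c)%R -> (0 <= rho < 1)%R ->
  (forall i, (i < n)%nat -> (Cmod (f i) <= c * rho ^ i)%R) -> (Cmod (csum f n) <= c / (1 - rho))%R.
Proof.
  intros Hc Hr H. eapply Rle_trans. apply Cmod_csum_le.
  eapply Rle_trans. apply rsum_le_compat. exact H. rewrite rsum_scal_l.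
  apply Rmult_le_compat_l; [exact Hc | apply rsum_geom_le; lra].
Qed.

Lemma pow_le_one r k : (0 <= r <= 1)%R -> (r ^ k <= 1)%R.
Proof. intros H; induction k; simpl. lra. assert (0 <= r ^ k)%R by (apply pow_le; lra). nra. Qed.

Lemma pow_le_pow_decr r m n : (0 <= r <= 1)%R -> (m <= n)%nat -> (r ^ n <= r ^ m)%R.
Proof.
  intros Hr H. replace n with (m + (n - m))%nat by lia. rewrite pow_add.
  assert (0 <= r ^ m)%R by (apply pow_le; lra).
  assert (r ^ (n - m) <= 1)%R by (apply pow_le_one; lra). nra.
Qed.

Lemma pow_S_le u k : (0 <= u <= 1)%R -> (u ^ S k <= u)%R.
Proof. intros H. rewrite <- (pow_1 u) at 2. apply pow_le_pow_decr; [lra | lia]. Qed.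

Lemma exp_le_compat x y : (x <= y)%R -> (exp x <= exp y)%R.
Proof. intros [H|H]. left; apply exp_increasing; auto. subst; lra. Qed.

Lemma exp_neg_div_le_1_minus y z t : (0 <= y)%R -> (y <= t)%R -> (y <= z)%R -> (t < 1)%R ->
  (exp (- (z / (1 - t))) <= 1 - y)%R.
Proof.
  intros H1 H2 H3 H4. rewrite exp_Ropp.
  assert (E := exp_ineq1_le (z / (1 - t))).
  assert (1 <= (1 - y) * (1 + z / (1 - t)))%R.
  { assert (y * (z / (1 - t)) <= t * (z / (1 - t)))%R.
    { apply Rmult_le_compat_r; [|lra]. apply Rdiv_le_0_compat; lra. }
    assert (t * (z / (1 - t)) = z / (1 - t) - z)%R by (field; lra). nra. }
  assert (0 < exp (z / (1 - t)))%R by apply exp_pos.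
  apply (Rmult_le_reg_l (exp (z / (1 - t)))); auto. rewrite Rinv_r by lra. nra.
Qed.

Lemma Cmod_1_minus_le w : (Cmod (1 - w) <= 1 + Cmod w)%R.
Proof. eapply Rle_trans. apply Cmod_triangle. rewrite Cmod_opp, Cmod_1. lra. Qed.

Lemma Cmod_1_minus_ge w : (1 - Cmod w <= Cmod (1 - w))%R.
Proof.
  assert (H := Cmod_triangle (1 - w) w). replace (1 - w + w) with (RtoC 1) in H by ring.
  rewrite Cmod_1 in H. lra.
Qed.

Lemma Cmod_mult_pow_le x q k : (Cmod q <= 1)%R -> (Cmod (x * q ^ k) <= Cmod x)%R.
Proof.
  intros Hq. rewrite Cmod_mult, Cmod_pow.
  assert (Cmod q ^ k <= 1)%R by (apply pow_le_one; split; [apply Cmod_ge_0|lra]).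
  assert (0 <= Cmod x)%R by apply Cmod_ge_0. nra.
Qed.

Lemma Cmod_inv_le z B : (1 <= B * Cmod z)%R -> (Cmod (/ z) <= B)%R.
Proof.
  intros H. assert (z <> 0). { intros E; rewrite E, Cmod_0 in H. lra. }
  rewrite Cmod_inv by auto. assert (0 < Cmod z)%R by (apply Cmod_gt_0; auto).
  apply (Rmult_le_reg_l (Cmod z)); auto. rewrite Rinv_r by lra. lra.
Qed.

Lemma Cmod_inv_1_minus_le z u : (Cmod z <= u)%R -> (u < 1)%R -> (Cmod (/ (1 - z)) <= / (1 - u))%R.
Proof.
  intros H1 H2. apply Cmod_inv_le. assert (H := Cmod_1_minus_ge z).
  apply (Rmult_le_reg_l (1 - u)); [lra|]. rewrite <- Rmult_assoc, Rinv_r by lra. nra.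
Qed.

Lemma Cmod_inv_mult_le D1 D2 B1 B2 : (0 <= B1)%R -> (0 <= B2)%R ->
  (1 <= B1 * Cmod D1)%R -> (1 <= B2 * Cmod D2)%R -> (Cmod (/ (D1 * D2)) <= B1 * B2)%R.
Proof.
  intros H0 H0' H1 H2. apply Cmod_inv_le. rewrite Cmod_mult.
  assert (0 <= Cmod D1)%R by apply Cmod_ge_0. assert (0 <= Cmod D2)%R by apply Cmod_ge_0.
  replace (B1 * B2 * (Cmod D1 * Cmod D2))%R with ((B1 * Cmod D1) * (B2 * Cmod D2))%R by ring. nra.
Qed.

Lemma Cmod_mult3_le A X Y a x y : (Cmod A <= a)%R -> (Cmod X <= x)%R -> (Cmod Y <= y)%R ->
  (Cmod (A * X * Y) <= a * x * y)%R.
Proof.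
  intros H1 H2 H3. rewrite !Cmod_mult.
  assert (0 <= Cmod A)%R by apply Cmod_ge_0. assert (0 <= Cmod X)%R by apply Cmod_ge_0.
  assert (0 <= Cmod Y)%R by apply Cmod_ge_0.
  apply Rmult_le_compat; nra.
Qed.

Lemma Cmod_1_minus_pow_ge q n : (Cmod q < 1)%R -> (0 < n)%nat -> (1 - Cmod q <= Cmod (1 - q ^ n))%R.
Proof.
  intros Hq Hn. eapply Rle_trans; [|apply Cmod_1_minus_ge]. rewrite Cmod_pow.
  assert (Cmod q ^ n <= Cmod q ^ 1)%R by (apply pow_le_pow_decr; [split; [apply Cmod_ge_0|lra]|lia]).
  rewrite pow_1 in H. lra.
Qed.

Lemma one_minus_pow_neq_0 q n : (Cmod q < 1)%R -> (0 < n)%nat -> 1 - q ^ n <> 0.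
Proof.
  intros Hq Hn E. assert (H := Cmod_1_minus_pow_ge q n Hq Hn). rewrite E, Cmod_0 in H. lra.
Qed.

(** * q-Pochhammer symbols *)

Fixpoint qpochC (x q : C) (n : nat) : C :=
  match n with O => 1 | S k => qpochC x q k * (1 - x * q ^ k) end.

Lemma qpochC_S x q n : qpochC x q (S n) = qpochC x q n * (1 - x * q ^ n).
Proof. reflexivity. Qed.

Lemma qpochC_shift x q n : qpochC x q (S n) = (1 - x) * qpochC (x * q) q n.
Proof.
  induction n. simpl. ring.
  rewrite qpochC_S, IHn. simpl. ring.
Qed.

Lemma qpochC_add x q i m : qpochC x q (i + m) = qpochC x q i * qpochC (x * q ^ i) q m.
Proof.
  induction m. simpl. rewrite Nat.add_0_r; ring.
  rewrite Nat.add_succ_r. simpl. rewrite IHm, Cpow_add_r. ring.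
Qed.

Lemma Cmod_qpochC_le_exp x q k : (Cmod x <= 1)%R ->
  (Cmod (qpochC x q k) <= exp (rsum (fun i => Cmod q ^ i) k))%R.
Proof.
  intros Hx. induction k; simpl. rewrite Cmod_1, exp_0. lra.
  rewrite Cmod_mult, exp_plus. apply Rmult_le_compat; try apply Cmod_ge_0; auto.
  eapply Rle_trans; [apply Cmod_1_minus_le|]. eapply Rle_trans; [|apply exp_ineq1_le].
  rewrite Cmod_mult, Cmod_pow. assert (0 <= Cmod q ^ k)%R by (apply pow_le, Cmod_ge_0). nra.
Qed.

Lemma exp_le_Cmod_qpochC x q t k : (Cmod q <= 1)%R -> (Cmod x <= t)%R -> (t < 1)%R ->
  (exp (- (rsum (fun i => Cmod q ^ i) k / (1 - t))) <= Cmod (qpochC x q k))%R.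
Proof.
  intros Hq Hx Ht. set (r := Cmod q) in *. assert (0 <= r)%R by apply Cmod_ge_0.
  assert (0 <= Cmod x)%R by apply Cmod_ge_0.
  induction k; simpl.
  - rewrite Cmod_1. unfold Rdiv. rewrite Rmult_0_l, Ropp_0, exp_0. lra.
  - rewrite Cmod_mult.
    replace (- ((rsum (fun i => r ^ i) k + r ^ k) / (1 - t)))%R with
      (- (rsum (fun i => r ^ i) k / (1 - t)) + - (r ^ k / (1 - t)))%R by (field; lra).
    rewrite exp_plus. apply Rmult_le_compat; try (left; apply exp_pos); auto.
    eapply Rle_trans; [|apply Cmod_1_minus_ge]. rewrite Cmod_mult, Cmod_pow. fold r.
    assert (0 <= r ^ k <= 1)%R by (split; [apply pow_le | apply pow_le_one]; lra).
    apply exp_neg_div_le_1_minus; [apply Rmult_le_pos | nra | nra |]; lra.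
Qed.

Lemma qpochC_bounded q t : (Cmod q < 1)%R -> (0 <= t < 1)%R ->
  exists B, (1 <= B)%R /\ forall x k, (Cmod x <= t)%R ->
     (Cmod (qpochC x q k) <= B)%R /\ (1 <= B * Cmod (qpochC x q k))%R.
Proof.
  intros Hq [Ht Ht1]. set (r := Cmod q) in *. assert (Hr : (0 <= r)%R) by apply Cmod_ge_0.
  set (c := (/ ((1 - t) * (1 - r)))%R).
  assert (Hg : forall k, (0 <= rsum (fun i => r ^ i) k <= / (1 - r))%R).
  { intros k; split; [apply rsum_nonneg; intros; apply pow_le; lra | apply rsum_geom_le; lra]. }
  assert (Hc : (/ (1 - r) <= c)%R).
  { apply Rinv_le_contravar; [apply Rmult_lt_0_compat; lra | nra]. }
  assert (Hdiv : forall k, (rsum (fun i => r ^ i) k / (1 - t) <= c)%R).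
  { intros k. unfold c, Rdiv. rewrite Rinv_mult, Rmult_comm.
    apply Rmult_le_compat_l; [left; apply Rinv_0_lt_compat; lra | apply Hg]. }
  exists (exp c). split.
  { rewrite <- exp_0. apply exp_le_compat. specialize (Hg O). lra. }
  intros x k Hx. split.
  - eapply Rle_trans; [apply Cmod_qpochC_le_exp; lra|]. fold r. apply exp_le_compat.
    specialize (Hg k). lra.
  - assert (Hlo := exp_le_Cmod_qpochC x q t k ltac:(left; exact Hq) Hx Ht1).
    assert (exp (- c) <= Cmod (qpochC x q k))%R.
    { eapply Rle_trans; [|exact Hlo]. apply exp_le_compat. specialize (Hdiv k). fold r. lra. }
    rewrite exp_Ropp in H.
    assert (0 < exp c)%R by apply exp_pos.
    apply (Rmult_le_compat_l (exp c)) in H; [|lra]. rewrite Rinv_r in H by lra. exact H.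
Qed.

Lemma qpochC_neq_0 x q k : (Cmod q < 1)%R -> (Cmod x < 1)%R -> qpochC x q k <> 0.
Proof.
  intros Hq Hx E. destruct (qpochC_bounded q (Cmod x) Hq (conj (Cmod_ge_0 x) Hx)) as [B [_ H]].
  destruct (H x k (Rle_refl _)) as [_ H2]. rewrite E, Cmod_0 in H2. lra.
Qed.

Lemma one_minus_mult_pow_neq_0 x q k : (Cmod q < 1)%R -> (Cmod x < 1)%R -> 1 - x * q ^ k <> 0.
Proof. intros Hq Hx E. apply (qpochC_neq_0 x q (S k) Hq Hx). simpl. rewrite E. ring. Qed.

(** * The three expressions for f_2 *)

Fixpoint tri (n : nat) : nat := match n with O => O | S k => (tri k + S k)%nat end.

Lemma le_tri n : (n <= tri n)%nat.
Proof. induction n; simpl; lia. Qed.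

Lemma tri_add n m : tri (n + m) = (tri n + tri m + n * m)%nat.
Proof.
  induction m. rewrite Nat.add_0_r. simpl. lia.
  rewrite Nat.add_succ_r. simpl. rewrite IHm. nia.
Qed.

Lemma tri_div2 n : (n * (n + 1) / 2)%nat = tri n.
Proof.
  assert (E : (n * (n + 1) = tri n * 2)%nat) by (induction n; simpl tri; nia).
  rewrite E. apply Nat.div_mul. lia.
Qed.

Lemma Cmod_q_mult_pow_lt q a K : (Cmod q < 1)%R -> (Cmod (q * a) < 1)%R ->
  (Cmod (q * (a * q ^ K)) < 1)%R.
Proof.
  intros Hq Ha. replace (q * (a * q ^ K)) with (q * a * q ^ K) by ring.
  eapply Rle_lt_trans; [apply Cmod_mult_pow_le; lra | exact Ha].
Qed.

Lemma csum_dilation_telescope (F G : C -> C) q a K :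
  (forall i, (i < K)%nat -> F (a * q ^ i) - F (a * q ^ i * q) = G (a * q ^ i)) ->
  F a - F (a * q ^ K) = csum (fun i => G (a * q ^ i)) K.
Proof.
  induction K; intros H.
  - simpl. rewrite Cmult_1_r. ring.
  - rewrite csum_S, <- IHK by (intros; apply H; lia). rewrite <- H by lia.
    replace (a * q ^ S K) with (a * q ^ K * q) by (rewrite Cpow_S; ring). ring.
Qed.

Definition lambert_term q x n := x * q ^ n / (1 - x * q ^ n).

Lemma lambert_term_dilation q a i : lambert_term q (a * q ^ i) 1 = lambert_term q a (S i).
Proof. unfold lambert_term. rewrite Cpow_1_r, (Cpow_S q i). f_equal; ring. Qed.

Definition f2_lambert_psum q a N := csum (fun i => - lambert_term q a (S i)) N.

Definition poch_term q x n := (q ^ (tri n) * (- x) ^ n) / (qpochC (q * x) q n * (1 - q ^ n)).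
Definition poch_psum q x M := csum (fun k => poch_term q x (S k)) M.
Definition poch_rem q x M := (- x) ^ (S M) * q ^ (tri (S M)) / qpochC (q * x) q (S M).

Lemma poch_psum_dilation q x M : (Cmod q < 1)%R -> (Cmod (q * x) < 1)%R ->
  poch_psum q x M - poch_psum q (x * q) M = - lambert_term q x 1 - poch_rem q x M.
Proof.
  intros Hq Hx. unfold lambert_term. rewrite Cpow_1_r.
  assert (Nqx : forall k, qpochC (q * x) q k <> 0) by (intros; apply qpochC_neq_0; auto).
  assert (Nfac : forall k, 1 - q * x * q ^ k <> 0)
    by (intros; apply one_minus_mult_pow_neq_0; auto).
  assert (N1 : 1 - x * q <> 0) by (replace (x * q) with (q * x * q ^ 0) by (simpl; ring); auto).
  assert (N2 : 1 - q * x <> 0) by (replace (q * x) with (x * q) by ring; auto).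
  induction M.
  - unfold poch_psum, poch_rem. simpl. field. auto.
  - unfold poch_psum in *. rewrite !csum_S.
    replace (csum (fun k => poch_term q x (S k)) M + poch_term q x (S M) -
      (csum (fun k => poch_term q (x * q) (S k)) M + poch_term q (x * q) (S M))) with
      ((csum (fun k => poch_term q x (S k)) M - csum (fun k => poch_term q (x * q) (S k)) M) +
       (poch_term q x (S M) - poch_term q (x * q) (S M))) by ring.
    rewrite IHM. set (k := S M).
    assert (E : qpochC (q * (x * q)) q k = qpochC (q * x) q k * (1 - q * x * q ^ k) / (1 - q * x)).
    { replace (q * (x * q)) with (q * x * q) by ring.
      rewrite <- qpochC_S, qpochC_shift. field. auto. }
    unfold poch_term, poch_rem. fold k. rewrite E, qpochC_S.
    replace (- (x * q)) with (- x * q) by ring. rewrite Cpow_mult_l.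
    change (tri (S k)) with (tri k + S k)%nat. rewrite Cpow_add_r, !Cpow_S.
    field. repeat split; auto. apply one_minus_pow_neq_0; [auto | unfold k; lia].
Qed.

Lemma poch_psum_lambert q a M K : (Cmod q < 1)%R -> (Cmod (q * a) < 1)%R ->
  f2_lambert_psum q a K - poch_psum q a M =
  csum (fun i => poch_rem q (a * q ^ i) M) K - poch_psum q (a * q ^ K) M.
Proof.
  intros Hq Ha.
  assert (E : poch_psum q a M - poch_psum q (a * q ^ K) M =
              csum (fun i => - lambert_term q (a * q ^ i) 1 - poch_rem q (a * q ^ i) M) K).
  { apply (csum_dilation_telescope (fun x => poch_psum q x M)
             (fun x => - lambert_term q x 1 - poch_rem q x M)). intros i _.
    apply poch_psum_dilation; [exact Hq | apply Cmod_q_mult_pow_lt; auto]. }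
  rewrite csum_minus, csum_opp, (csum_ext _ _ K (fun i _ => lambert_term_dilation q a i)) in E.
  unfold f2_lambert_psum. rewrite csum_opp.
  replace (poch_psum q a M) with
    (poch_psum q (a * q ^ K) M + (poch_psum q a M - poch_psum q (a * q ^ K) M)) by ring.
  rewrite E. ring.
Qed.

Definition theta_term q x n :=
  (1 - x * q ^ (2 * n)) * q ^ (n * n) * x ^ n / ((1 - x * q ^ n) * (1 - q ^ n)).
Definition theta_psum q x M := csum (fun k => theta_term q x (S k)) M.
Definition f2_theta_psum q a N := csum (fun k => - theta_term q a (S k)) N.
Definition theta_rem q x n := x ^ n * q ^ (n * n) / (1 - x * q ^ n).

Lemma theta_psum_dilation q x M : (Cmod q < 1)%R -> (Cmod (q * x) < 1)%R ->
  theta_psum q x M - theta_psum q (x * q) M = lambert_term q x 1 - theta_rem q x (S M).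
Proof.
  intros Hq Hx. unfold lambert_term. rewrite Cpow_1_r.
  assert (Nfac : forall k, 1 - x * q ^ k * q <> 0).
  { intros k. replace (x * q ^ k * q) with (q * x * q ^ k) by ring.
    apply one_minus_mult_pow_neq_0; auto. }
  assert (N1 : 1 - x * q <> 0) by (replace (x * q) with (x * q ^ 0 * q) by (simpl; ring); auto).
  induction M.
  - unfold theta_psum, theta_rem. simpl. field. auto.
  - unfold theta_psum in *. rewrite !csum_S.
    replace (csum (fun k => theta_term q x (S k)) M + theta_term q x (S M) -
      (csum (fun k => theta_term q (x * q) (S k)) M + theta_term q (x * q) (S M))) with
      ((csum (fun k => theta_term q x (S k)) M - csum (fun k => theta_term q (x * q) (S k)) M) +
       (theta_term q x (S M) - theta_term q (x * q) (S M))) by ring.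
    rewrite IHM. set (k := S M).
    assert (N2 : 1 - x * q ^ k <> 0).
    { unfold k. rewrite Cpow_S. replace (x * (q * q ^ M)) with (x * q ^ M * q) by ring. auto. }
    assert (N3 : 1 - x * (q * q ^ k) <> 0) by (replace (x * (q * q ^ k)) with (x * q ^ k * q) by ring; auto).
    assert (N4 : 1 - q * q ^ k <> 0) by (rewrite <- Cpow_S; apply one_minus_pow_neq_0; [auto | lia]).
    assert (N5 : 1 - q ^ k <> 0) by (apply one_minus_pow_neq_0; [auto | unfold k; lia]).
    unfold theta_term, theta_rem. fold k.
    replace (2 * k)%nat with (k + k)%nat by lia.
    replace (2 * S k)%nat with (k + k + 1 + 1)%nat by lia.
    replace (S k * S k)%nat with (k * k + k + k + 1)%nat by lia.
    rewrite Cpow_mult_l, !Cpow_add_r, !Cpow_S.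
    field. repeat split; auto.
Qed.

Lemma theta_psum_lambert q a M K : (Cmod q < 1)%R -> (Cmod (q * a) < 1)%R ->
  f2_theta_psum q a M - f2_lambert_psum q a K =
  csum (fun i => theta_rem q (a * q ^ i) (S M)) K - theta_psum q (a * q ^ K) M.
Proof.
  intros Hq Ha.
  assert (E : theta_psum q a M - theta_psum q (a * q ^ K) M =
              csum (fun i => lambert_term q (a * q ^ i) 1 - theta_rem q (a * q ^ i) (S M)) K).
  { apply (csum_dilation_telescope (fun x => theta_psum q x M)
             (fun x => lambert_term q x 1 - theta_rem q x (S M))). intros i _.
    apply theta_psum_dilation; [exact Hq | apply Cmod_q_mult_pow_lt; auto]. }
  rewrite csum_minus, (csum_ext _ _ K (fun i _ => lambert_term_dilation q a i)) in E.
  unfold f2_theta_psum, f2_lambert_psum. rewrite !csum_opp. fold (theta_psum q a M).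
  replace (theta_psum q a M) with
    (theta_psum q (a * q ^ K) M + (theta_psum q a M - theta_psum q (a * q ^ K) M)) by ring.
  rewrite E. ring.
Qed.

Definition Ccv (u : nat -> C) (l : C) := forall eps, (0 < eps)%R ->
  exists N, forall n, (N <= n)%nat -> (Cmod (u n - l) < eps)%R.
Definition eventually_small (e : nat -> R) := forall eps, (0 < eps)%R ->
  exists N, forall n, (N <= n)%nat -> (e n < eps)%R.

Lemma geom_eventually_small c r : (0 <= c)%R -> (0 <= r < 1)%R ->
  eventually_small (fun n => c * r ^ n)%R.
Proof.
  intros Hc Hr eps He.
  destruct (pow_lt_1_zero r ltac:(rewrite Rabs_pos_eq; lra) (eps / (c + 1))) as [N HN].
  { apply Rdiv_lt_0_compat; lra. }
  exists N. intros n Hn. specialize (HN n Hn). rewrite Rabs_pos_eq in HN by (apply pow_le; lra).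
  assert (0 <= r ^ n)%R by (apply pow_le; lra).
  apply (Rmult_lt_compat_l (c + 1)) in HN; [|lra].
  replace ((c + 1) * (eps / (c + 1)))%R with eps in HN by (field; lra). nra.
Qed.

Lemma eventually_small_plus e1 e2 :
  eventually_small e1 -> eventually_small e2 -> eventually_small (fun n => e1 n + e2 n)%R.
Proof.
  intros H1 H2 eps He. destruct (H1 (eps / 2)%R) as [N1 HN1]; [lra|].
  destruct (H2 (eps / 2)%R) as [N2 HN2]; [lra|]. exists (N1 + N2)%nat. intros n Hn.
  specialize (HN1 n ltac:(lia)). specialize (HN2 n ltac:(lia)). lra.
Qed.

Lemma Ccv_close u v l e : Ccv u l -> eventually_small e ->
  (forall m, (Cmod (v (S m) - u (S m)) <= e m)%R) -> Ccv v l.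
Proof.
  intros Hu He Hb eps Heps. destruct (Hu (eps / 2)%R) as [N1 HN1]; [lra|].
  destruct (He (eps / 2)%R) as [N2 HN2]; [lra|]. exists (S (N1 + N2)). intros n Hn.
  destruct n as [|m]; [lia|].
  replace (v (S m) - l) with ((v (S m) - u (S m)) + (u (S m) - l)) by ring.
  eapply Rle_lt_trans. apply Cmod_triangle.
  specialize (HN1 (S m) ltac:(lia)). specialize (HN2 m ltac:(lia)). specialize (Hb m). lra.
Qed.

Lemma pow_mult_S_le u v k : (0 <= u <= 1)%R -> (0 <= v <= 1)%R ->
  ((u * v) ^ S k <= u ^ S k * v)%R.
Proof.
  intros Hu Hv. rewrite Rpow_mult_distr. apply Rmult_le_compat_l; [apply pow_le; lra|].
  apply pow_S_le; lra.
Qed.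

Section Dilation_remainders.
Variables (q a : C).
Hypotheses (Hq : (Cmod q < 1)%R) (Ha : (Cmod (q * a) < 1)%R).

Lemma Cmod_dilated_le i : (Cmod (a * q ^ S i) <= Cmod (q * a) * Cmod q ^ i)%R.
Proof.
  rewrite Cpow_S. replace (a * (q * q ^ i)) with (q * a * q ^ i) by ring.
  rewrite Cmod_mult, Cmod_pow. lra.
Qed.

Lemma Cmod_q_dilated_le i : (Cmod (q * (a * q ^ i)) <= Cmod (q * a))%R.
Proof.
  replace (q * (a * q ^ i)) with (q * a * q ^ i) by ring. apply Cmod_mult_pow_le. lra.
Qed.

Lemma Cmod_dilated_pow_le i n : (0 < n)%nat -> (Cmod (a * q ^ i * q ^ n) <= Cmod (q * a))%R.
Proof.
  intros Hn. replace (a * q ^ i * q ^ n) with (a * q ^ S (i + (n - 1))).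
  - eapply Rle_trans; [apply Cmod_dilated_le|]. rewrite <- (Rmult_1_r (Cmod (q * a))) at 2.
    apply Rmult_le_compat_l; [apply Cmod_ge_0 | apply pow_le_one; split; [apply Cmod_ge_0 | lra]].
  - rewrite <- Cmult_assoc, <- Cpow_add_r. do 2 f_equal. lia.
Qed.

Lemma Cmod_theta_rem_le i n : (0 < n)%nat ->
  (Cmod (theta_rem q (a * q ^ i) n) <= Cmod (q * a) ^ n / (1 - Cmod (q * a)) * Cmod q ^ i)%R.
Proof.
  intros Hn. set (r := Cmod q) in *. set (s := Cmod (q * a)) in *. set (y := a * q ^ i).
  assert (Hr : (0 <= r)%R) by apply Cmod_ge_0. assert (Hs : (0 <= s)%R) by apply Cmod_ge_0.
  assert (Cy : (Cmod y * r = s * r ^ i)%R).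
  { unfold y, s, r. rewrite <- Cmod_pow, <- !Cmod_mult. f_equal. ring. }
  assert (HI := Cmod_inv_1_minus_le (y * q ^ n) s (Cmod_dilated_pow_le i n Hn) Ha).
  assert (Hri : (0 <= r ^ i <= 1)%R) by (split; [apply pow_le | apply pow_le_one]; lra).
  assert (Hy : (Cmod y ^ n * r ^ (n * n) <= s ^ n * r ^ i)%R).
  { apply Rle_trans with (Cmod y ^ n * r ^ n)%R.
    - apply Rmult_le_compat_l; [apply pow_le, Cmod_ge_0|]. apply pow_le_pow_decr; [lra | nia].
    - rewrite <- Rpow_mult_distr, Cy. destruct n as [|n]; [lia|]. apply pow_mult_S_le; lra. }
  unfold theta_rem, Cdiv. rewrite !Cmod_mult, !Cmod_pow. fold r.
  assert (0 <= Cmod (/ (1 - y * q ^ n)))%R by apply Cmod_ge_0.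
  apply Rle_trans with (s ^ n * r ^ i * / (1 - s))%R; [|right; unfold Rdiv; ring].
  apply Rmult_le_compat; auto. apply Rmult_le_pos; apply pow_le; [apply Cmod_ge_0 | lra].
Qed.

Lemma Cmod_theta_term_dilated_le m k :
  (Cmod (theta_term q (a * q ^ S m) (S k))
     <= 2 * Cmod q ^ m / ((1 - Cmod (q * a)) * (1 - Cmod q)) * Cmod (q * a) ^ k)%R.
Proof.
  set (r := Cmod q) in *. set (s := Cmod (q * a)) in *. set (x := a * q ^ S m). set (n := S k).
  assert (Hr : (0 <= r)%R) by apply Cmod_ge_0. assert (Hs : (0 <= s)%R) by apply Cmod_ge_0.
  assert (Hrm : (0 <= r ^ m <= 1)%R) by (split; [apply pow_le | apply pow_le_one]; lra).
  assert (Cx : (Cmod x <= s * r ^ m)%R) by apply Cmod_dilated_le.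
  assert (HI1 := Cmod_inv_1_minus_le (x * q ^ n) s
                   (Cmod_dilated_pow_le (S m) n ltac:(unfold n; lia)) Ha).
  assert (HI2 : (Cmod (/ (1 - q ^ n)) <= / (1 - r))%R).
  { apply Cmod_inv_1_minus_le; [|lra]. rewrite Cmod_pow. apply pow_S_le; lra. }
  assert (HN : (Cmod (1 - x * q ^ (2 * n)) <= 2)%R).
  { eapply Rle_trans; [apply Cmod_1_minus_le|].
    assert (Cmod (x * q ^ (2 * n)) <= Cmod x)%R by (apply Cmod_mult_pow_le; left; exact Hq).
    assert (s * r ^ m <= 1)%R by (rewrite <- (Rmult_1_r 1); apply Rmult_le_compat; lra). lra. }
  assert (HP : (Cmod (q ^ (n * n) * x ^ n) <= r ^ m * s ^ k)%R).
  { rewrite Cmod_mult, !Cmod_pow. fold r.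
    assert (Hx : (Cmod x ^ n <= r ^ m * s ^ k)%R).
    { apply Rle_trans with ((s * r ^ m) ^ n)%R.
      - apply pow_incr. split; [apply Cmod_ge_0 | exact Cx].
      - eapply Rle_trans; [apply pow_mult_S_le; lra|]. rewrite Rmult_comm.
        apply Rmult_le_compat_l; [lra | apply pow_le_pow_decr; [lra | lia]]. }
    assert (r ^ (n * n) <= 1)%R by (apply pow_le_one; lra).
    assert (0 <= r ^ (n * n))%R by (apply pow_le; lra).
    assert (0 <= Cmod x ^ n)%R by (apply pow_le, Cmod_ge_0). nra. }
  replace (theta_term q x n) with
    ((1 - x * q ^ (2 * n)) * (q ^ (n * n) * x ^ n) * / (1 - x * q ^ n) * / (1 - q ^ n)).
  2:{ assert (1 - x * q ^ n <> 0).
      { intros E. assert (H := Cmod_1_minus_ge (x * q ^ n)).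
        assert (H' := Cmod_dilated_pow_le (S m) n ltac:(unfold n; lia)).
        rewrite E, Cmod_0 in H. fold s x in H'. lra. }
      assert (1 - q ^ n <> 0) by (apply one_minus_pow_neq_0; [exact Hq | unfold n; lia]).
      unfold theta_term. field. auto. }
  replace (2 * r ^ m / ((1 - s) * (1 - r)) * s ^ k)%R with
    (2 * (r ^ m * s ^ k) * / (1 - s) * / (1 - r))%R by (field; lra).
  rewrite (Cmod_mult _ (/ (1 - q ^ n))). apply Rmult_le_compat; try apply Cmod_ge_0; auto.
  apply Cmod_mult3_le; auto.
Qed.

Variable B : R.
Hypothesis HB1 : (1 <= B)%R.
Hypothesis HB : forall x k, (Cmod x <= Cmod (q * a))%R -> (1 <= B * Cmod (qpochC x q k))%R.

Lemma Cmod_poch_rem_le i n :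
  (Cmod (poch_rem q (a * q ^ i) n) <= B * Cmod (q * a) ^ S n * Cmod q ^ i)%R.
Proof.
  set (r := Cmod q) in *. set (s := Cmod (q * a)) in *. set (y := a * q ^ i).
  assert (Hr : (0 <= r)%R) by apply Cmod_ge_0. assert (Hs : (0 <= s)%R) by apply Cmod_ge_0.
  assert (Cy : (Cmod y * r = s * r ^ i)%R).
  { unfold y, s, r. rewrite <- Cmod_pow, <- !Cmod_mult. f_equal. ring. }
  assert (HI : (Cmod (/ qpochC (q * y) q (S n)) <= B)%R) by (apply Cmod_inv_le, HB, Cmod_q_dilated_le).
  assert (Hri : (0 <= r ^ i <= 1)%R) by (split; [apply pow_le | apply pow_le_one]; lra).
  assert (Hy : (Cmod y ^ S n * r ^ tri (S n) <= s ^ S n * r ^ i)%R).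
  { apply Rle_trans with (Cmod y ^ S n * r ^ S n)%R.
    - apply Rmult_le_compat_l; [apply pow_le, Cmod_ge_0|].
      apply pow_le_pow_decr; [lra | apply le_tri].
    - rewrite <- Rpow_mult_distr, Cy. apply pow_mult_S_le; lra. }
  unfold poch_rem, Cdiv. rewrite !Cmod_mult, !Cmod_pow, Cmod_opp. fold r.
  assert (0 <= Cmod (/ qpochC (q * y) q (S n)))%R by apply Cmod_ge_0.
  assert (0 <= s ^ S n * r ^ i)%R by (apply Rmult_le_pos; [apply pow_le|]; lra).
  apply Rle_trans with (s ^ S n * r ^ i * B)%R; [|right; ring].
  apply Rmult_le_compat; auto. apply Rmult_le_pos; apply pow_le; [apply Cmod_ge_0 | lra].
Qed.

Lemma Cmod_poch_term_dilated_le m k :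
  (Cmod (poch_term q (a * q ^ S m) (S k)) <= B * Cmod q ^ m / (1 - Cmod q) * Cmod (q * a) ^ k)%R.
Proof.
  set (r := Cmod q) in *. set (s := Cmod (q * a)) in *. set (x := a * q ^ S m). set (n := S k).
  assert (Hr : (0 <= r)%R) by apply Cmod_ge_0. assert (Hs : (0 <= s)%R) by apply Cmod_ge_0.
  assert (HI : (Cmod (/ (qpochC (q * x) q n * (1 - q ^ n))) <= B * / (1 - r))%R).
  { assert (H1 := HB (q * x) n (Cmod_q_dilated_le _)).
    apply Cmod_inv_mult_le; auto; [lra | left; apply Rinv_0_lt_compat; lra |].
    assert (H2 := Cmod_1_minus_pow_ge q n Hq ltac:(lia)). fold r in H2.
    apply (Rmult_le_reg_l (1 - r)); [lra|]. rewrite <- Rmult_assoc, Rinv_r by lra. lra. }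
  assert (Hrm : (0 <= r ^ m <= 1)%R) by (split; [apply pow_le | apply pow_le_one]; lra).
  assert (Hx : (Cmod x ^ n <= r ^ m * s ^ k)%R).
  { apply Rle_trans with ((s * r ^ m) ^ n)%R.
    - apply pow_incr. split; [apply Cmod_ge_0 | apply Cmod_dilated_le].
    - eapply Rle_trans; [apply pow_mult_S_le; lra|]. rewrite Rmult_comm.
      apply Rmult_le_compat_l; [lra | apply pow_le_pow_decr; [lra | lia]]. }
  assert (Hqt : (r ^ tri n <= 1)%R) by (apply pow_le_one; lra).
  unfold poch_term, Cdiv. rewrite !Cmod_mult, !Cmod_pow, Cmod_opp. fold r.
  assert (0 <= r ^ tri n)%R by (apply pow_le; lra).
  assert (0 <= Cmod x ^ n)%R by (apply pow_le, Cmod_ge_0).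
  assert (0 <= r ^ m * s ^ k)%R by (apply Rmult_le_pos; [lra | apply pow_le; lra]).
  apply Rle_trans with (1 * (r ^ m * s ^ k) * (B * / (1 - r)))%R; [|right; unfold Rdiv; ring].
  apply Rmult_le_compat; try apply Rmult_le_pos; auto using Cmod_ge_0.
  apply Rmult_le_compat; auto.
Qed.

End Dilation_remainders.

Lemma lambert_cv_of_poch_cv q a L : (Cmod q < 1)%R -> (Cmod (q * a) < 1)%R ->
  Ccv (poch_psum q a) L -> Ccv (f2_lambert_psum q a) L.
Proof.
  intros Hq Ha HL. set (r := Cmod q) in *. set (s := Cmod (q * a)) in *.
  assert (Hr : (0 <= r)%R) by apply Cmod_ge_0. assert (Hs : (0 <= s)%R) by apply Cmod_ge_0.
  destruct (qpochC_bounded q s Hq (conj Hs Ha)) as [B [HB1 HB]].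
  apply (Ccv_close _ _ L (fun m => B * (s * s) / (1 - r) * s ^ m + B / (1 - r) / (1 - s) * r ^ m)%R HL).
  { apply eventually_small_plus; apply geom_eventually_small; try lra;
      repeat apply Rdiv_le_0_compat; try apply Rmult_le_pos; nra. }
  intros m. rewrite (poch_psum_lambert q a (S m) (S m) Hq Ha).
  eapply Rle_trans; [apply Cmod_triangle|]. rewrite Cmod_opp. apply Rplus_le_compat.
  - replace (B * (s * s) / (1 - r) * s ^ m)%R with (B * s ^ S (S m) / (1 - r))%R by (simpl; field; lra).
    apply Cmod_csum_geom_le; [apply Rmult_le_pos; [lra | apply pow_le; lra] | lra |].
    intros i _. apply Cmod_poch_rem_le; auto. intros x k Hx. apply HB. exact Hx.
  - replace (B / (1 - r) / (1 - s) * r ^ m)%R with (B * r ^ m / (1 - r) / (1 - s))%R by (field; lra).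
    apply Cmod_csum_geom_le; [apply Rdiv_le_0_compat; [apply Rmult_le_pos; [lra | apply pow_le]|]; lra | lra |].
    intros k _. apply Cmod_poch_term_dilated_le; auto. intros x j Hx. apply HB. exact Hx.
Qed.

Lemma theta_cv_of_lambert_cv q a L : (Cmod q < 1)%R -> (Cmod (q * a) < 1)%R ->
  Ccv (f2_lambert_psum q a) L -> Ccv (f2_theta_psum q a) L.
Proof.
  intros Hq Ha HL. set (r := Cmod q) in *. set (s := Cmod (q * a)) in *.
  assert (Hr : (0 <= r)%R) by apply Cmod_ge_0. assert (Hs : (0 <= s)%R) by apply Cmod_ge_0.
  apply (Ccv_close _ _ L (fun m => (s * s) / (1 - s) / (1 - r) * s ^ m
                                  + 2 / ((1 - s) * (1 - r)) / (1 - s) * r ^ m)%R HL).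
  { apply eventually_small_plus; apply geom_eventually_small; try lra;
      repeat apply Rdiv_le_0_compat; try apply Rmult_le_pos; try apply Rmult_lt_0_compat; lra. }
  intros m. rewrite (theta_psum_lambert q a (S m) (S m) Hq Ha).
  eapply Rle_trans; [apply Cmod_triangle|]. rewrite Cmod_opp. apply Rplus_le_compat.
  - replace ((s * s) / (1 - s) / (1 - r) * s ^ m)%R with (s ^ S (S m) / (1 - s) / (1 - r))%R
      by (simpl; field; lra).
    apply Cmod_csum_geom_le; [apply Rdiv_le_0_compat; [apply pow_le |]; lra | lra |].
    intros i _. apply (Cmod_theta_rem_le q a Hq Ha). lia.
  - replace (2 / ((1 - s) * (1 - r)) / (1 - s) * r ^ m)%R with
      (2 * r ^ m / ((1 - s) * (1 - r)) / (1 - s))%R by (field; lra).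
    apply Cmod_csum_geom_le; [| lra |].
    + apply Rdiv_le_0_compat; [apply Rmult_le_pos; [lra | apply pow_le; lra] | apply Rmult_lt_0_compat; lra].
    + intros k _. apply (Cmod_theta_term_dilated_le q a Hq Ha).
Qed.

Lemma eventually_small_le e e' :
  eventually_small e -> (forall n, (e' n <= e n)%R) -> eventually_small e'.
Proof.
  intros H Hle eps He. destruct (H eps He) as [N HN]. exists N. intros n Hn.
  specialize (HN n Hn). specialize (Hle n). lra.
Qed.

Lemma eventually_small_S e : eventually_small e -> eventually_small (fun n => e (S n)).
Proof. intros H eps He. destruct (H eps He) as [N HN]. exists N. intros n Hn. apply HN. lia. Qed.

(** * The inner sums *)

Definition inner_term q a j m := qpochC (q ^ j) q m * (- a * q ^ j) ^ m * q ^ (tri m) /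
   (qpochC q q m * qpochC (a * q * q ^ j) q (m + j)).
Definition inner_cert_coef q a j := (1 - a * q * q ^ j * q ^ j) / (a * q * q ^ j * (1 - q ^ j)).
Definition inner_cert q a j m := inner_cert_coef q a j * (1 - q ^ m) * inner_term q a j m.
Definition inner_defect q a j M := 1 - csum (inner_term q a j) (S M).

Section Inner_sum.
Variables q a : C.
Hypotheses (Hq : (Cmod q < 1)%R) (Ha : (Cmod (q * a) < 1)%R).

Lemma Cmod_aq_pow_lt k : (Cmod (a * q * q ^ k) < 1)%R.
Proof.
  replace (a * q) with (q * a) by ring.
  eapply Rle_lt_trans; [apply Cmod_mult_pow_le; lra | exact Ha].
Qed.

Lemma one_minus_aq_pow_neq_0 k x : x = a * q * q ^ k -> 1 - x <> 0.
Proof.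
  intros ->. replace (a * q * q ^ k) with (a * q * q ^ 0 * q ^ k) by (simpl; ring).
  apply one_minus_mult_pow_neq_0, Cmod_aq_pow_lt. exact Hq.
Qed.

Lemma one_minus_q_pow_neq_0 k x : x = q * q ^ k -> 1 - x <> 0.
Proof. intros ->. rewrite <- Cpow_S. apply one_minus_pow_neq_0; [exact Hq | lia]. Qed.

Section WZ_pair.
Variables (j m : nat).
Hypotheses (Hq0 : q <> 0) (Ha0 : a <> 0) (Hj : (0 < j)%nat).

Lemma inner_term_0_cert : inner_term q a j 0 + inner_cert q a j 1 = 0.
Proof.
  assert (HX : q ^ j <> 0) by (apply Cpow_nz; auto).
  assert (H1 : 1 - q ^ j <> 0) by (apply one_minus_pow_neq_0; auto).
  assert (H2 : 1 - q <> 0) by (apply (one_minus_q_pow_neq_0 0); simpl; ring).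
  assert (H3 : qpochC (a * q * q ^ j) q j <> 0) by (apply qpochC_neq_0, Cmod_aq_pow_lt; auto).
  assert (H4 : 1 - a * q * q ^ j * q ^ j <> 0) by (apply (one_minus_aq_pow_neq_0 (j + j)); rewrite Cpow_add_r; ring).
  unfold inner_cert, inner_term, inner_cert_coef. simpl tri.
  replace (1 + j)%nat with (S j) by lia. rewrite Nat.add_0_l, qpochC_S.
  simpl qpochC. simpl Cpow. field. repeat split; auto.
Qed.

Let X := q ^ j.
Let Y := q ^ m.
Let A := (- a) ^ m.
Let Z := (q ^ j) ^ m.
Let T := q ^ (tri m).
Let P := qpochC (q * q ^ j) q m.
Let Q := qpochC q q m.
Let R0 := qpochC (a * q * (q * q ^ j)) q (m + j).

Lemma inner_term_succ_index :
  inner_term q a (S j) m = P * (A * (Y * Z)) * T / (Q * (R0 * (1 - a * q * (q * X) * (Y * X)))).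
Proof.
  unfold inner_term. rewrite (Cpow_S q j).
  replace (m + S j)%nat with (S (m + j)) by lia. rewrite qpochC_S, Cpow_add_r, !Cpow_mult_l.
  unfold P, A, Y, Z, T, Q, R0, X. ring.
Qed.

Lemma qpochC_qj_S : qpochC (q ^ j) q (S m) = (1 - X) * P.
Proof. rewrite qpochC_shift, (Cmult_comm (q ^ j) q). reflexivity. Qed.

Lemma inner_pow_S : (- a * q ^ j) ^ (S m) = (- a * X) * (A * Z).
Proof. rewrite Cpow_S, Cpow_mult_l. reflexivity. Qed.

Lemma q_pow_tri_S : q ^ (tri (S m)) = T * (q * Y).
Proof. change (tri (S m)) with (tri m + S m)%nat. rewrite Cpow_add_r. reflexivity. Qed.

Lemma qpochC_q_S : qpochC q q (S m) = Q * (1 - q * Y).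
Proof. reflexivity. Qed.

Lemma qpochC_aqj_S : qpochC (a * q * q ^ j) q (S m + j) = (1 - a * q * X) * R0.
Proof.
  simpl (S m + j)%nat. rewrite qpochC_shift. unfold R0, X.
  replace (a * q * q ^ j * q) with (a * q * (q * q ^ j)) by ring. reflexivity.
Qed.

Lemma inner_term_succ : inner_term q a j (S m) = ((1 - X) * P) * ((- a * X) * (A * Z)) * (T * (q * Y)) /
   ((Q * (1 - q * Y)) * ((1 - a * q * X) * R0)).
Proof. unfold inner_term. rewrite qpochC_qj_S, inner_pow_S, q_pow_tri_S, qpochC_q_S, qpochC_aqj_S.
  reflexivity. Qed.

Lemma inner_term_succ2 : inner_term q a j (S (S m)) =
   ((1 - X) * P * (1 - X * (q * Y))) * ((- a * X) * ((- a * X) * (A * Z))) *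
   (T * (q * Y) * (q * (q * Y))) /
   ((Q * (1 - q * Y) * (1 - q * (q * Y))) * ((1 - a * q * X) * (R0 * (1 - a * q * (q * X) * (Y * X))))).
Proof.
  unfold inner_term. rewrite qpochC_S, qpochC_qj_S, (Cpow_S _ (S m)), inner_pow_S.
  change (tri (S (S m))) with (tri (S m) + S (S m))%nat. rewrite Cpow_add_r, q_pow_tri_S.
  rewrite qpochC_S, qpochC_q_S. simpl (S (S m) + j)%nat. rewrite qpochC_shift, qpochC_S.
  replace (a * q * q ^ j * q) with (a * q * (q * q ^ j)) by ring. fold R0.
  rewrite Cpow_add_r. unfold X, Y. rewrite !Cpow_S. ring.
Qed.

Lemma inner_term_wz :
  inner_term q a (S j) m = inner_term q a j (S m) + inner_cert q a j (S (S m)) - inner_cert q a j (S m).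
Proof.
  unfold inner_cert, inner_cert_coef. rewrite inner_term_succ_index, inner_term_succ, inner_term_succ2.
  fold X. rewrite !Cpow_S. fold Y.
  assert (HX : X <> 0) by (apply Cpow_nz; auto).
  assert (H1 : 1 - X <> 0) by (apply one_minus_pow_neq_0; auto).
  assert (NQ : Q <> 0) by (apply qpochC_neq_0; auto).
  assert (NR : R0 <> 0).
  { apply qpochC_neq_0; [exact Hq|]. replace (a * q * (q * q ^ j)) with (a * q * q ^ S j) by (rewrite Cpow_S; ring).
    apply Cmod_aq_pow_lt. }
  assert (N1 : 1 - q * Y <> 0) by (apply (one_minus_q_pow_neq_0 m); reflexivity).
  assert (N2 : 1 - q * (q * Y) <> 0) by (apply (one_minus_q_pow_neq_0 (S m)); unfold Y; rewrite Cpow_S; ring).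
  assert (N3 : 1 - a * q * X <> 0) by (apply (one_minus_aq_pow_neq_0 j); reflexivity).
  assert (N4 : 1 - a * q * (q * X) * (Y * X) <> 0).
  { apply (one_minus_aq_pow_neq_0 (S (m + j + j))). unfold X, Y. rewrite Cpow_S, !Cpow_add_r. ring. }
  field. repeat split; auto.
Qed.

End WZ_pair.

Lemma inner_defect_succ j M : q <> 0 -> a <> 0 -> (0 < j)%nat ->
  inner_defect q a (S j) M = inner_defect q a j (S M) - inner_cert q a j (S (S M)).
Proof.
  intros Hq0 Ha0 Hj. unfold inner_defect.
  rewrite (csum_ext (inner_term q a (S j))
    (fun m => inner_term q a j (S m) + (inner_cert q a j (S (S m)) - inner_cert q a j (S m))) (S M)).
  2:{ intros i _. rewrite (inner_term_wz j i Hq0 Ha0 Hj). ring. }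
  rewrite csum_plus, (csum_telescope (fun m => inner_cert q a j (S m))).
  rewrite (csum_shift (inner_term q a j) (S M)).
  assert (E := inner_term_0_cert j Hq0 Ha0 Hj).
  replace (inner_term q a j 0) with
    ((inner_term q a j 0 + inner_cert q a j 1) - inner_cert q a j 1) by ring.
  rewrite E. ring.
Qed.

Lemma inner_defect_1 M :
  inner_defect q a 1 M = (- a * q) ^ (S M) * q ^ (tri (S M)) / qpochC (a * q * q) q (S M).
Proof.
  assert (Haqq : (Cmod (a * q * q) < 1)%R) by (rewrite <- (Cpow_1_r q) at 2; apply Cmod_aq_pow_lt).
  assert (N1 : forall k, qpochC (a * q * q) q k <> 0) by (intros; apply qpochC_neq_0; auto).
  assert (N2 : forall k, 1 - a * q * q * q ^ k <> 0) by (intros; apply one_minus_mult_pow_neq_0; auto).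
  assert (HF : forall m, inner_term q a 1 m = (- a * q) ^ m * q ^ (tri m) / qpochC (a * q * q) q (S m)).
  { intros m. unfold inner_term. rewrite Cpow_1_r. replace (m + 1)%nat with (S m) by lia.
    field. split; [apply N1 | apply qpochC_neq_0; auto]. }
  induction M.
  - unfold inner_defect. simpl csum. rewrite HF. simpl. field.
    specialize (N2 O). simpl in N2. rewrite Cmult_1_r in N2. auto.
  - unfold inner_defect in *. rewrite csum_S, HF.
    replace (1 - (csum (inner_term q a 1) (S M) + (- a * q) ^ S M * q ^ tri (S M) / qpochC (a * q * q) q (S (S M)))) with
      ((1 - csum (inner_term q a 1) (S M)) - (- a * q) ^ S M * q ^ tri (S M) / qpochC (a * q * q) q (S (S M))) by ring.
    rewrite IHM, (qpochC_S _ q (S M)), (Cpow_S _ (S M)).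
    change (tri (S (S M))) with (tri (S M) + S (S M))%nat. rewrite Cpow_add_r, (Cpow_S q (S M)).
    field. split; auto.
Qed.

Lemma inner_term_geom_bound :
  exists K, (0 <= K)%R /\ forall J m, (Cmod (inner_term q a (S J) m) <= K * Cmod (q * a) ^ m)%R.
Proof.
  assert (Hr : (0 <= Cmod q)%R) by apply Cmod_ge_0. assert (Hs : (0 <= Cmod (q * a))%R) by apply Cmod_ge_0.
  destruct (qpochC_bounded q (Cmod q) Hq (conj Hr Hq)) as [B1 [HB1 H1]].
  destruct (qpochC_bounded q (Cmod (q * a)) Hq (conj Hs Ha)) as [B2 [HB2 H2]].
  exists (B1 * (B1 * B2))%R. split; [apply Rmult_le_pos; [|apply Rmult_le_pos]; lra|].
  intros J m. unfold inner_term, Cdiv. rewrite Cmod_mult.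
  assert (Hi : (Cmod (/ (qpochC q q m * qpochC (a * q * q ^ S J) q (m + S J))) <= B1 * B2)%R).
  { apply Cmod_inv_mult_le; try lra. apply H1; lra. apply H2.
    replace (a * q * q ^ S J) with (q * a * q ^ S J) by ring. apply Cmod_mult_pow_le; lra. }
  rewrite !Cmod_mult. replace (Cmod q * Cmod a)%R with (Cmod (q * a)) by apply Cmod_mult.
  assert (A1 : (Cmod (qpochC (q ^ S J) q m) <= B1)%R).
  { apply H1. rewrite Cpow_S. apply Cmod_mult_pow_le; lra. }
  assert (A2 : (Cmod ((- a * q ^ S J) ^ m) <= Cmod (q * a) ^ m)%R).
  { rewrite Cmod_pow. apply pow_incr. split; [apply Cmod_ge_0|].
    replace (- a * q ^ S J) with (- (q * a * q ^ J)) by (rewrite Cpow_S; ring).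
    rewrite Cmod_opp. apply Cmod_mult_pow_le; lra. }
  assert (A3 : (Cmod (q ^ tri m) <= 1)%R) by (rewrite Cmod_pow; apply pow_le_one; lra).
  assert (0 <= Cmod (q * a) ^ m)%R by (apply pow_le; lra).
  apply Rle_trans with (B1 * Cmod (q * a) ^ m * 1 * (B1 * B2))%R; [|right; ring].
  assert (0 <= Cmod (qpochC (q ^ S J) q m))%R by apply Cmod_ge_0.
  assert (0 <= Cmod ((- a * q ^ S J) ^ m))%R by apply Cmod_ge_0.
  assert (0 <= Cmod (q ^ tri m))%R by apply Cmod_ge_0.
  apply Rmult_le_compat; auto using Cmod_ge_0; [repeat apply Rmult_le_pos; auto|].
  apply Rmult_le_compat; auto; [apply Rmult_le_pos; auto|].
  apply Rmult_le_compat; auto.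
Qed.

Lemma inner_defect_bounded : exists K, forall J M, (Cmod (inner_defect q a (S J) M) <= K)%R.
Proof.
  destruct inner_term_geom_bound as [K [HK HKb]].
  exists (1 + K / (1 - Cmod (q * a)))%R. intros J M.
  eapply Rle_trans; [apply Cmod_1_minus_le|]. apply Rplus_le_compat_l.
  apply Cmod_csum_geom_le; auto. split; [apply Cmod_ge_0 | exact Ha].
Qed.

Lemma inner_defect_1_small : eventually_small (fun M => Cmod (inner_defect q a 1 M)).
Proof.
  set (s := Cmod (q * a)) in *. assert (Hs : (0 <= s)%R) by apply Cmod_ge_0.
  destruct (qpochC_bounded q s Hq (conj Hs Ha)) as [B [HB1 HB]].
  apply (eventually_small_le (fun M => B * s * s ^ M)%R).
  { apply geom_eventually_small; [apply Rmult_le_pos|]; lra. }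
  intros M. rewrite inner_defect_1. unfold Cdiv. rewrite !Cmod_mult, !Cmod_pow.
  assert (Hi : (Cmod (/ qpochC (a * q * q) q (S M)) <= B)%R).
  { apply Cmod_inv_le, HB. rewrite <- (Cpow_1_r q) at 2.
    replace (a * q * q ^ 1) with (q * a * q ^ 1) by ring. apply Cmod_mult_pow_le; lra. }
  replace (Cmod (- a * q)) with s by (unfold s; rewrite <- Cmod_opp; f_equal; ring).
  assert (Cmod q ^ tri (S M) <= 1)%R by (apply pow_le_one; split; [apply Cmod_ge_0 | lra]).
  assert (0 <= Cmod q ^ tri (S M))%R by (apply pow_le, Cmod_ge_0).
  assert (0 <= s ^ S M)%R by (apply pow_le; lra).
  assert (0 <= Cmod (/ qpochC (a * q * q) q (S M)))%R by apply Cmod_ge_0.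
  apply Rle_trans with (s ^ S M * 1 * B)%R; [apply Rmult_le_compat; nra | simpl; right; ring].
Qed.

Lemma inner_cert_small J : eventually_small (fun M => Cmod (inner_cert q a (S J) (S (S M)))).
Proof.
  set (s := Cmod (q * a)) in *. assert (Hs : (0 <= s)%R) by apply Cmod_ge_0.
  destruct inner_term_geom_bound as [K [HK HKb]].
  set (c := Cmod (inner_cert_coef q a (S J))). assert (Hc : (0 <= c)%R) by apply Cmod_ge_0.
  apply (eventually_small_le (fun M => c * 2 * K * (s * s) * s ^ M)%R).
  { apply geom_eventually_small; [repeat apply Rmult_le_pos|]; lra. }
  intros M. unfold inner_cert. rewrite !Cmod_mult. fold c.
  assert (Cmod (1 - q ^ S (S M)) <= 2)%R.
  { eapply Rle_trans; [apply Cmod_1_minus_le|]. rewrite Cmod_pow.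
    assert (Cmod q ^ S (S M) <= 1)%R by (apply pow_le_one; split; [apply Cmod_ge_0 | lra]). lra. }
  specialize (HKb J (S (S M))). fold s in HKb.
  apply Rle_trans with (c * 2 * (K * s ^ S (S M)))%R; [|simpl; right; ring].
  apply Rmult_le_compat; [apply Rmult_le_pos; [lra | apply Cmod_ge_0] | apply Cmod_ge_0 | | exact HKb].
  apply Rmult_le_compat_l; lra.
Qed.

Lemma inner_defect_small J : q <> 0 -> a <> 0 ->
  eventually_small (fun M => Cmod (inner_defect q a (S J) M)).
Proof.
  intros Hq0 Ha0. induction J; [exact inner_defect_1_small|].
  apply (eventually_small_le (fun M => Cmod (inner_defect q a (S J) (S M))
                                      + Cmod (inner_cert q a (S J) (S (S M))))%R).
  - apply eventually_small_plus; [|apply inner_cert_small].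
    exact (eventually_small_S _ IHJ).
  - intros M. rewrite inner_defect_succ by (auto; lia).
    eapply Rle_trans; [apply Cmod_triangle|]. rewrite Cmod_opp. lra.
Qed.

End Inner_sum.

(** * The Bailey difference *)

Definition bailey_pairC (q a : C) (alpha beta : nat -> C) :=
  alpha O = 1 /\ forall n, (0 < n)%nat ->
    beta n = csum (fun j => alpha j / (qpochC q q (n - j) * qpochC (a * q) q (n + j))) (S n).

Definition beta_term (q a : C) (beta : nat -> C) k :=
  qpochC q q k * (- a) ^ (S k) * (q ^ (tri (S k)) * beta (S k)).
Definition alpha_term (q a : C) (alpha : nat -> C) k :=
  (qpochC q q k * ((- a) ^ (S k) * q ^ (tri (S k)))) / qpochC (q * a) q (S k) * alpha (S k).

Section Bailey_difference.
Variables (q a : C) (alpha beta : nat -> C).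
Hypotheses (Hq : (Cmod q < 1)%R) (Ha : (Cmod (q * a) < 1)%R).

Lemma Cmod_aq_lt : (Cmod (a * q) < 1)%R.
Proof. rewrite Cmult_comm. exact Ha. Qed.

Lemma beta_double_term J i :
  qpochC q q (J + i) * (- a) ^ S (J + i) * q ^ tri (S (J + i)) * alpha (S J) /
    (qpochC q q (J + i - J) * qpochC (a * q) q (S (J + i) + S J))
  = alpha_term q a alpha J * inner_term q a (S J) i.
Proof.
  assert (N1 : qpochC q q i <> 0) by (apply qpochC_neq_0; auto).
  assert (N2 : qpochC (a * q) q (S J) <> 0) by (apply qpochC_neq_0; auto using Cmod_aq_lt).
  assert (N3 : qpochC (a * q * q ^ S J) q (i + S J) <> 0)
    by (apply qpochC_neq_0, Cmod_aq_pow_lt; auto).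
  unfold alpha_term, inner_term. replace (J + i - J)%nat with i by lia.
  replace (S (J + i) + S J)%nat with (S J + (i + S J))%nat by lia.
  rewrite qpochC_add. replace (q * a) with (a * q) by ring.
  rewrite qpochC_add. replace (q * q ^ J) with (q ^ S J) by (rewrite Cpow_S; ring).
  replace (S (J + i)) with (S J + i)%nat by lia. rewrite tri_add, !Cpow_add_r, Cpow_mult_r, Cpow_mult_l.
  field. repeat split; auto.
Qed.

Lemma beta_term_expand k : bailey_pairC q a alpha beta ->
  beta_term q a beta k = poch_term q a (S k) +
    csum (fun J => qpochC q q k * (- a) ^ S k * q ^ tri (S k) * alpha (S J) /
                   (qpochC q q (k - J) * qpochC (a * q) q (S k + S J))) (S k).
Proof.
  intros [H0 Hb]. unfold beta_term. rewrite (Hb (S k)) by lia. rewrite csum_shift, H0.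
  rewrite !Cmult_plus_distr_l, <- !csum_scal_l. f_equal.
  - assert (qpochC q q k <> 0) by (apply qpochC_neq_0; auto).
    assert (qpochC (q * a) q k <> 0) by (apply qpochC_neq_0; auto).
    assert (1 - q * q ^ k <> 0) by (apply one_minus_mult_pow_neq_0; auto).
    assert (1 - q * a * q ^ k <> 0) by (apply one_minus_mult_pow_neq_0; auto).
    unfold poch_term. rewrite Nat.sub_0_r, Nat.add_0_r, !qpochC_S, (Cpow_S q k).
    replace (a * q) with (q * a) by ring. field. repeat split; auto.
  - apply csum_ext. intros J _. simpl (S k - S J)%nat. unfold Cdiv. ring.
Qed.

(* Exchanging the order of summation in the beta-series. *)
Lemma beta_alpha_psum_diff N : bailey_pairC q a alpha beta ->
  csum (beta_term q a beta) N - csum (alpha_term q a alpha) N =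
  poch_psum q a N - csum (fun J => alpha_term q a alpha J * inner_defect q a (S J) (N - S J)) N.
Proof.
  intros Hpair.
  rewrite (csum_ext _ _ N (fun k _ => beta_term_expand k Hpair)), csum_plus, csum_triangle_swap.
  fold (poch_psum q a N).
  rewrite (csum_ext _ (fun J => alpha_term q a alpha J * csum (inner_term q a (S J)) (S (N - S J))) N).
  2:{ intros J HJ. replace (S (N - S J)) with (N - J)%nat by lia.
      rewrite <- csum_scal_l. apply csum_ext. intros i _. apply beta_double_term. }
  unfold inner_defect.
  rewrite (csum_ext (fun J => alpha_term q a alpha J * (1 - csum (inner_term q a (S J)) (S (N - S J))))
    (fun J => alpha_term q a alpha J - alpha_term q a alpha J * csum (inner_term q a (S J)) (S (N - S J))) N)
    by (intros; ring).
  rewrite csum_minus. ring.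
Qed.

End Bailey_difference.

Lemma eventually_small_uniform (P : nat -> nat -> R) J0 :
  (forall J, eventually_small (P J)) ->
  forall eps, (0 < eps)%R -> exists M0, forall J M, (J < J0)%nat -> (M0 <= M)%nat -> (P J M < eps)%R.
Proof.
  intros H eps He. induction J0.
  - exists O. intros; lia.
  - destruct IHJ0 as [M1 HM1]. destruct (H J0 eps He) as [M2 HM2].
    exists (M1 + M2)%nat. intros J M HJ HM.
    destruct (Nat.eq_dec J J0) as [->|]; [apply HM2 | apply HM1]; lia.
Qed.

Lemma Cminus_0_r z : z - 0 = z.
Proof. ring. Qed.

Lemma Un_cv_rsum_tail (u : nat -> R) l eps : Un_cv (rsum u) l -> (0 < eps)%R ->
  exists J0, forall N, (J0 <= N)%nat -> (rsum u N - rsum u J0 < eps)%R.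
Proof.
  intros H He. destruct (H (eps / 2)%R) as [J0 HJ0]; [lra|]. exists J0. intros N HN.
  assert (A := HJ0 N HN). assert (B := HJ0 J0 (le_n J0)). unfold R_dist in A, B.
  apply Rabs_def2 in A. apply Rabs_def2 in B. lra.
Qed.

(* Tannery's theorem, for the triangular convolution of an absolutely summable sequence
   with a bounded kernel whose rows tend to [0]. *)
Lemma tannery_Ccv_0 (c : nat -> C) (d : nat -> nat -> C) sg K :
  Un_cv (rsum (fun k => Cmod (c k))) sg ->
  (forall J M, (Cmod (d J M) <= K)%R) ->
  (forall J, eventually_small (fun M => Cmod (d J M))) ->
  Ccv (fun N => csum (fun J => c J * d J (N - S J)%nat) N) 0.
Proof.
  intros Hsg HK Hd eps Heps.
  assert (HK0 : (0 <= K)%R) by (eapply Rle_trans; [apply Cmod_ge_0 | apply (HK O O)]).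
  set (ac := fun k => Cmod (c k)). assert (Hac : forall k, (0 <= ac k)%R) by (intros; apply Cmod_ge_0).
  destruct (Un_cv_rsum_tail ac sg (eps / (2 * (K + 1)))%R Hsg) as [J0 HJ0];
    [apply Rdiv_lt_0_compat; lra|].
  set (S0 := rsum ac J0). assert (HS0 : (0 <= S0)%R) by (apply rsum_nonneg; auto).
  destruct (eventually_small_uniform (fun J M => Cmod (d J M)) J0 Hd (eps / (2 * (S0 + 1)))%R)
    as [M0 HM0]; [apply Rdiv_lt_0_compat; lra|].
  exists (S (J0 + M0)). intros N HN. rewrite Cminus_0_r.
  replace N with (J0 + (N - J0))%nat at 1 by lia. rewrite csum_add_range.
  eapply Rle_lt_trans; [apply Cmod_triangle|].
  assert (Hhead : (Cmod (csum (fun J => (c J * d J (N - S J)%nat)%C) J0) <= S0 * (eps / (2 * (S0 + 1))))%R).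
  { eapply Rle_trans; [apply Cmod_csum_le|]. unfold S0. rewrite Rmult_comm, <- rsum_scal_l.
    apply rsum_le_compat. intros J HJ. rewrite Cmod_mult. fold (ac J).
    rewrite (Rmult_comm _ (ac J)). apply Rmult_le_compat_l; auto. left. apply HM0; lia. }
  assert (Htail_split : (rsum ac N - S0 = rsum (fun i => ac (J0 + i)%nat) (N - J0))%R).
  { unfold S0. replace N with (J0 + (N - J0))%nat at 1 by lia. rewrite rsum_add_range. ring. }
  assert (Htail : (Cmod (csum (fun i => (c (J0 + i)%nat * d (J0 + i)%nat (N - S (J0 + i))%nat)%C) (N - J0))
                   <= K * (rsum ac N - S0))%R).
  { eapply Rle_trans; [apply Cmod_csum_le|]. rewrite Htail_split, <- rsum_scal_l.
    apply rsum_le_compat. intros i _. rewrite Cmod_mult. fold (ac (J0 + i)%nat).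
    rewrite (Rmult_comm K). apply Rmult_le_compat_l; auto. }
  assert (S0 * (eps / (2 * (S0 + 1))) <= eps / 2)%R.
  { apply Rle_trans with ((S0 + 1) * (eps / (2 * (S0 + 1))))%R.
    - apply Rmult_le_compat_r; [apply Rdiv_le_0_compat|]; lra.
    - right; field; lra. }
  assert (K * (rsum ac N - S0) < eps / 2)%R.
  { assert (0 <= rsum ac N - S0)%R by (rewrite Htail_split; apply rsum_nonneg; auto).
    specialize (HJ0 N ltac:(lia)). fold S0 in HJ0.
    apply Rle_lt_trans with ((K + 1) * (rsum ac N - S0))%R; [nra|].
    apply Rlt_le_trans with ((K + 1) * (eps / (2 * (K + 1))))%R.
    - apply Rmult_lt_compat_l; lra.
    - right; field; lra. }
  lra.
Qed.

Lemma Ccv_plus u v l1 l2 : Ccv u l1 -> Ccv v l2 -> Ccv (fun n => u n + v n) (l1 + l2).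
Proof.
  intros H1 H2 eps He. destruct (H1 (eps / 2)%R) as [N1 HN1]; [lra|].
  destruct (H2 (eps / 2)%R) as [N2 HN2]; [lra|]. exists (N1 + N2)%nat. intros n Hn.
  replace (u n + v n - (l1 + l2)) with ((u n - l1) + (v n - l2)) by ring.
  eapply Rle_lt_trans; [apply Cmod_triangle|].
  specialize (HN1 n ltac:(lia)). specialize (HN2 n ltac:(lia)). lra.
Qed.

Lemma Ccv_opp u l : Ccv u l -> Ccv (fun n => - u n) (- l).
Proof.
  intros H eps He. destruct (H eps He) as [N HN]. exists N. intros n Hn.
  replace (- u n - - l) with (- (u n - l)) by ring. rewrite Cmod_opp. auto.
Qed.

Lemma Ccv_ext u v l : (forall n, u n = v n) -> Ccv u l -> Ccv v l.
Proof. intros E H eps He. destruct (H eps He) as [N HN]. exists N. intros n Hn. rewrite <- E. auto. Qed.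

Lemma bailey_psum_diff_cv q a alpha beta Sb Sa sg :
  (Cmod q < 1)%R -> (Cmod (q * a) < 1)%R -> bailey_pairC q a alpha beta ->
  Un_cv (rsum (fun k => Cmod (alpha_term q a alpha k))) sg ->
  Ccv (csum (beta_term q a beta)) Sb -> Ccv (csum (alpha_term q a alpha)) Sa ->
  Ccv (poch_psum q a) (Sb - Sa).
Proof.
  intros Hq Ha Hpair Habs Hb Ha'.
  set (err := fun N => csum (fun J => alpha_term q a alpha J * inner_defect q a (S J) (N - S J)) N).
  assert (Herr : Ccv err 0).
  { destruct (classic (q = 0 \/ a = 0)) as [Hz | Hnz].
    - intros eps He. exists O. intros n _. unfold err. rewrite csum_eq_0, Cminus_0_r, Cmod_0; [lra|].
      intros J _. unfold alpha_term. simpl tri.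
      rewrite Cpow_add_r, (Cpow_S q J), (Cpow_S (- a) J). destruct Hz as [-> | ->]; unfold Cdiv; ring.
    - destruct (inner_defect_bounded q a Hq Ha) as [K HK].
      apply (tannery_Ccv_0 _ _ sg K Habs HK).
      intros J. apply inner_defect_small; tauto. }
  apply (Ccv_ext (fun N => (csum (beta_term q a beta) N + - csum (alpha_term q a alpha) N) + err N)).
  { intros N. assert (E := beta_alpha_psum_diff q a alpha beta Hq Ha N Hpair).
    unfold Cminus in E. unfold err. rewrite E. ring. }
  replace (Sb - Sa) with (Sb + - Sa + 0) by ring.
  apply Ccv_plus; [apply Ccv_plus; [|apply Ccv_opp] | ]; assumption.
Qed.

Definition toC (z : Defs.Cx) : C := (Defs.Re z, Defs.Im z).

Lemma toC_Cadd z w : toC (Defs.Cadd z w) = toC z + toC w.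
Proof. reflexivity. Qed.
Lemma toC_Copp z : toC (Defs.Copp z) = - toC z.
Proof. reflexivity. Qed.
Lemma toC_Csub z w : toC (Defs.Csub z w) = toC z - toC w.
Proof. reflexivity. Qed.
Lemma toC_Cmul z w : toC (Defs.Cmul z w) = toC z * toC w.
Proof. reflexivity. Qed.
Lemma toC_Cone : toC Defs.Cone = 1.
Proof. reflexivity. Qed.
Lemma toC_Cinv z : toC (Defs.Cinv z) = / toC z.
Proof. unfold toC, Defs.Cinv, Cinv. simpl. f_equal; f_equal; f_equal; ring. Qed.
Lemma toC_Cdiv z w : toC (Defs.Cdiv z w) = toC z / toC w.
Proof. unfold Defs.Cdiv. rewrite toC_Cmul, toC_Cinv. reflexivity. Qed.
Lemma toC_Cpow z n : toC (Defs.Cpow z n) = toC z ^ n.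
Proof. induction n; [reflexivity|]. simpl Defs.Cpow. rewrite toC_Cmul, IHn, Cpow_S. ring. Qed.
Lemma toC_qpoch x q n : toC (Defs.qpoch x q n) = qpochC (toC x) (toC q) n.
Proof.
  induction n; [reflexivity|].
  simpl Defs.qpoch. rewrite toC_Cmul, IHn, toC_Csub, toC_Cone, toC_Cmul, toC_Cpow. reflexivity.
Qed.
Lemma toC_Csum_upto f n : toC (Defs.Csum_upto f n) = csum (fun k => toC (f k)) (S n).
Proof.
  induction n; simpl Defs.Csum_upto; [simpl csum; ring|]. rewrite toC_Cadd, IHn. reflexivity.
Qed.
Lemma Cnorm_toC z : Defs.Cnorm z = Cmod (toC z).
Proof. unfold Defs.Cnorm, Cmod, toC. simpl. f_equal. ring. Qed.

Lemma Cnorm_Cmul_swap a q : Defs.Cnorm (Defs.Cmul a q) = Cmod (toC q * toC a).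
Proof. rewrite Cnorm_toC, toC_Cmul, Cmult_comm. reflexivity. Qed.

Ltac push_toC := repeat rewrite ?toC_Copp, ?toC_Cdiv, ?toC_Cmul, ?toC_Csub, ?toC_Cone, ?toC_Cpow,
                                ?toC_qpoch, ?tri_div2.

Lemma bailey_pairC_toC a q alpha beta : Defs.bailey_pair a q alpha beta ->
  bailey_pairC (toC q) (toC a) (fun n => toC (alpha n)) (fun n => toC (beta n)).
Proof.
  intros [H0 [_ Hb]]. split; [rewrite H0; reflexivity|].
  intros n Hn. rewrite Hb, toC_Csum_upto by exact Hn. apply csum_ext. intros j _. push_toC. reflexivity.
Qed.

Lemma fst_csum (g : nat -> C) n : fst (csum g n) = rsum (fun k => fst (g k)) n.
Proof. induction n; simpl; [|rewrite IHn]; reflexivity. Qed.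
Lemma snd_csum (g : nat -> C) n : snd (csum g n) = rsum (fun k => snd (g k)) n.
Proof. induction n; simpl; [|rewrite IHn]; reflexivity. Qed.
Lemma sum_f_R0_rsum g n : sum_f_R0 g n = rsum g (S n).
Proof. induction n; simpl sum_f_R0; [simpl; ring | rewrite IHn; reflexivity]. Qed.

Lemma Cmod_le_2_Rmax z : (Cmod z <= 2 * Rmax (Rabs (fst z)) (Rabs (snd z)))%R.
Proof.
  eapply Rle_trans; [apply Cmod_2Rmax|]. apply Rmult_le_compat_r.
  - eapply Rle_trans; [apply Rabs_pos | apply Rmax_l].
  - rewrite <- (sqrt_square 2) at 2 by lra. left. apply sqrt_lt_1_alt. lra.
Qed.

Lemma Un_cv_of_Cabs_conv (f : nat -> Defs.Cx) (g : nat -> C) s :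
  (forall k, toC (f (S k)) = g k) ->
  infinite_sum (fun n => Defs.Cnorm (f (S n))) s -> Un_cv (rsum (fun k => Cmod (g k))) s.
Proof.
  intros Hfg H eps He. destruct (H eps He) as [N HN]. exists (S N). intros n Hn.
  destruct n as [|m]; [lia|]. specialize (HN m ltac:(lia)).
  rewrite sum_f_R0_rsum in HN. erewrite rsum_ext; [exact HN|]. intros i _.
  rewrite <- Hfg, <- Cnorm_toC. reflexivity.
Qed.

Lemma Ccv_of_Cseries1 (f : nat -> Defs.Cx) (g : nat -> C) L :
  (forall k, toC (f (S k)) = g k) -> Defs.Cseries1 f L -> Ccv (csum g) (toC L).
Proof.
  intros Hfg [H1 H2] eps He.
  destruct (H1 (eps / 2)%R ltac:(lra)) as [N1 HN1]. destruct (H2 (eps / 2)%R ltac:(lra)) as [N2 HN2].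
  exists (S (N1 + N2)). intros n Hn. destruct n as [|m]; [lia|].
  specialize (HN1 m ltac:(lia)). specialize (HN2 m ltac:(lia)).
  unfold R_dist in HN1, HN2. rewrite sum_f_R0_rsum in HN1, HN2.
  rewrite (csum_ext g (fun k => toC (f (S k)))) by (intros; symmetry; apply Hfg).
  eapply Rle_lt_trans; [apply Cmod_le_2_Rmax|].
  assert (Rmax (Rabs (fst (csum (fun k => toC (f (S k))) (S m) - toC L)%C))
               (Rabs (snd (csum (fun k => toC (f (S k))) (S m) - toC L)%C)) < eps / 2)%R.
  { apply Rmax_lub_lt; simpl; [rewrite fst_csum | rewrite snd_csum]; assumption. }
  lra.
Qed.

Lemma Cseries1_of_Ccv (f : nat -> Defs.Cx) (g : nat -> C) L :
  (forall k, toC (f (S k)) = g k) -> Ccv (csum g) (toC L) -> Defs.Cseries1 f L.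
Proof.
  intros Hfg H. split; intros eps He; destruct (H eps He) as [N HN];
    exists N; intros n Hn; specialize (HN (S n) ltac:(lia));
    rewrite (csum_ext g (fun k => toC (f (S k)))) in HN by (intros; symmetry; apply Hfg);
    unfold R_dist; rewrite sum_f_R0_rsum; eapply Rle_lt_trans; try exact HN;
    eapply Rle_trans; try apply Rmax_Cmod.
  - apply Rle_trans with (Rabs (fst (csum (fun k => toC (f (S k))) (S n) - toC L)%C)); [|apply Rmax_l].
    simpl. rewrite fst_csum. apply Rle_refl.
  - apply Rle_trans with (Rabs (snd (csum (fun k => toC (f (S k))) (S n) - toC L)%C)); [|apply Rmax_r].
    simpl. rewrite snd_csum. apply Rle_refl.
Qed.

End ComplexQSeries.

Import ComplexQSeries.

Theorem corollary3p2 (a q : Cx) (alpha beta : nat -> Cx) :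
  Cnorm q < 1 ->
  Cnorm (Cmul a q) < 1 ->
  (* no denominator vanishes: (aq;q)_n <> 0 for all n, i.e. a q^(n+1) <> 1 *)
  (forall n : nat, Cmul a (Cpow q (S n)) <> Cone) ->
  bailey_pair a q alpha beta ->
  let tb := fun n : nat =>
    Cmul (Cmul (qpoch q q (n - 1)) (Cpow (Copp a) n))
         (Cmul (Cpow q (n * (n + 1) / 2)) (beta n)) in
  let ta := fun n : nat =>
    Cmul (Cdiv (Cmul (qpoch q q (n - 1)) (Cmul (Cpow (Copp a) n) (Cpow q (n * (n + 1) / 2))))
               (qpoch (Cmul q a) q n))
         (alpha n) in
  Cabs_conv1 tb ->
  Cabs_conv1 ta ->
  forall Sb Sa : Cx,
  Cseries1 tb Sb ->
  Cseries1 ta Sa ->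
  let L := Csub Sb Sa in
  Cseries1 (fun n => Copp (Cdiv (Cmul (Cmul (Csub Cone (Cmul a (Cpow q (2 * n)))) (Cpow q (n * n)))
                                      (Cpow a n))
                                (Cmul (Csub Cone (Cmul a (Cpow q n))) (Csub Cone (Cpow q n))))) L /\
  Cseries1 (fun n => Cdiv (Cmul (Cpow q (n * (n + 1) / 2)) (Cpow (Copp a) n))
                          (Cmul (qpoch (Cmul q a) q n) (Csub Cone (Cpow q n)))) L /\
  Cseries1 (fun n => Copp (Cdiv (Cmul a (Cpow q n)) (Csub Cone (Cmul a (Cpow q n))))) L.
Proof.
  (* [|aq| < 1] already keeps every [(aq;q)_n] away from [0], and only the alpha-series
     needs to converge absolutely. *)
  intros Hq Haq _ Hpair tb ta _ [sg Hta] Sb Sa HSb HSa L.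
  rewrite Cnorm_toC in Hq. rewrite Cnorm_Cmul_swap in Haq.
  assert (Hterm_b : forall k, toC (tb (S k)) = beta_term (toC q) (toC a) (fun n => toC (beta n)) k)
    by (intros k; unfold tb; rewrite Nat.sub_succ, Nat.sub_0_r; push_toC; reflexivity).
  assert (Hterm_a : forall k, toC (ta (S k)) = alpha_term (toC q) (toC a) (fun n => toC (alpha n)) k)
    by (intros k; unfold ta; rewrite Nat.sub_succ, Nat.sub_0_r; push_toC; reflexivity).
  assert (Hpoch : Ccv (poch_psum (toC q) (toC a)) (toC L)).
  { unfold L. rewrite toC_Csub.
    apply (bailey_psum_diff_cv _ _ _ _ _ _ sg Hq Haq (bailey_pairC_toC _ _ _ _ Hpair)).
    - exact (Un_cv_of_Cabs_conv _ _ _ Hterm_a Hta).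
    - exact (Ccv_of_Cseries1 _ _ _ Hterm_b HSb).
    - exact (Ccv_of_Cseries1 _ _ _ Hterm_a HSa). }
  assert (Hlambert := lambert_cv_of_poch_cv _ _ _ Hq Haq Hpoch).
  assert (Htheta := theta_cv_of_lambert_cv _ _ _ Hq Haq Hlambert).
  split; [|split].
  - eapply Cseries1_of_Ccv; [|exact Htheta]. intros k. push_toC. reflexivity.
  - eapply Cseries1_of_Ccv; [|exact Hpoch]. intros k. push_toC. reflexivity.
  - eapply Cseries1_of_Ccv; [|exact Hlambert]. intros k. push_toC. reflexivity.
Qed.
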